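(* Let $n,k,s$ be positive integers with $2\le s\le\lfloor n/k\rfloor$, write $n=ds+s_0$ with $d=\lfloor n/s\rfloor$ and $s_0\le\min\{s,d\}$, and let $\gamma_{cc}(n,k,s)$ be the repair bandwidth of the Cubic Code for the Fixed Cluster Repair System with these parameters storing a file of size $M$. Then $$\gamma_{cc}(n,k,s)\le\frac{M/d}{1-\left(1-\frac{k}{(s+1)d}\right)^{s+1}}.$$
   Context: FCRS: $n=ds+s_0$ servers in clusters $1,\dots,s$ of size $d$ and a cluster $s+1$ of size $s_0$; any $k$ servers recover the file; a failed server in cluster $r$ is repaired from all $d$ servers of some cluster $i\in[s]$, $i\neq r$. Cubic Code: the file is split into $m$ chunks of size $M/m$ and encoded with a $(d^{s+1},m)$ MDS code with symbols $C_b$ indexed by $b=b_{s+1}\cdots b_1$, $b_i\in[d]$; server $(i,j)$ stores $\{C_b:b_i=j\}$ and, to repair $(r,\ell)$ from cluster $i$, sends $\{C_b:b_i=j,b_r=\ell\}$; here $m=\min\{d^{s+1}-\prod_{i=1}^{s+1}(d-k_i):k_i\in\mathbb Z_{\ge0},\ \sum_i k_i=k,\ k_{s+1}\le s_0\}$, and $\gamma_{cc}(n,k,s)=Md^s/m$. *)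

From mathcomp Require Import all_boot all_order all_algebra.
Set Implicit Arguments. Unset Strict Implicit. Unset Printing Implicit Defensive.
Import Order.TTheory GRing.Theory Num.Theory.
Local Open Scope ring_scope.

(* FCRS parameters: n servers, s clusters of size d = n %/ s, plus
   cluster s+1 of size s0 = n %% s (so n = d*s + s0). *)
Definition fcrs_d (n s : nat) : nat := (n %/ s)%N.
Definition fcrs_s0 (n s : nat) : nat := (n %% s)%N.

(* A choice (k_1, ..., k_{s+1}) of nonnegative integers; index i : 'I_s.+1
   stands for cluster i+1, so ord_max is cluster s+1.  Each k_i <= k
   automatically since they sum to k, so 'I_k.+1 loses nothing. *)
Definition cc_feasible (k s s0 : nat) (kv : {ffun 'I_s.+1 -> 'I_k.+1}) : bool :=
  ((\sum_(i < s.+1) (kv i : nat))%N == k) && ((kv ord_max : nat) <= s0)%N.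

Definition cc_value (d k s : nat) (kv : {ffun 'I_s.+1 -> 'I_k.+1}) : int :=
  (d ^ s.+1)%:Z - \prod_(i < s.+1) ((d%:Z) - (kv i : nat)%:Z).

(* m = min over feasible choices of cc_value.  (The default d^(s+1) is never
   below the true minimum when every k_i <= d, which holds under the
   theorem's hypotheses since k <= d.) *)
Definition cc_m (n k s : nat) : int :=
  \big[Order.min/((fcrs_d n s) ^ s.+1)%:Z]_(kv : {ffun 'I_s.+1 -> 'I_k.+1}
       | cc_feasible (fcrs_s0 n s) kv) cc_value (fcrs_d n s) kv.

Definition gamma_cc (R : realFieldType) (M : R) (n k s : nat) : R :=
  M * ((fcrs_d n s) ^ s)%:R / (cc_m n k s)%:~R.

From mathcomp Require Import all_boot all_order all_algebra.
From mathcomp Require Import ring.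
Import Order.TTheory GRing.Theory Num.Theory.
Local Open Scope ring_scope.

(* The numbers d - k_i are nonnegative with mean d q, where
   q = 1 - k / ((s+1) d), so by AM-GM their product is at most (d q)^(s+1).
   Hence every feasible value, and so m, is at least d^(s+1) (1 - q^(s+1)),
   which is positive because 0 <= q < 1; dividing M d^s by this lower bound
   gives the claim. *)

Lemma prod_le_mean_expn (F : numFieldType) (n : nat) (x : 'I_n -> F) :
  (forall i, 0 <= x i) -> \prod_i x i <= ((\sum_i x i) / n%:R) ^+ n.
Proof.
move=> x_ge0.
have := Order.le_of_leif (leif_AGM (A := 'I_n) (fun i _ => x_ge0 i)).
by rewrite card_ord.
Qed.

Lemma bigmin_intr_ge (F : numDomainType) (I : finType) (P : pred I)
    (f : I -> int) (x0 : int) (b : F) :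
  b <= x0%:~R -> (forall i, P i -> b <= (f i)%:~R) ->
  b <= (\big[Order.min/x0]_(i | P i) f i)%:~R.
Proof.
move=> b_le_x0 b_le_f; apply: (big_ind (fun x : int => b <= x%:~R)) => // x y.
by case: leP.
Qed.

Lemma leq_divn_swap (n k s : nat) : (0 < k)%N -> (0 < s)%N ->
  (s <= n %/ k)%N -> (k <= n %/ s)%N.
Proof. by move=> k_gt0 s_gt0; rewrite !leq_divRL // mulnC. Qed.

Lemma divf_cancel_expr (F : fieldType) (s : nat) (x y z : F) :
  y != 0 -> z != 0 -> x / y / z = x * y ^+ s / (y ^+ s.+1 * z).
Proof.
move=> y_neq0 z_neq0; rewrite exprS.
move: (y ^+ s) (expf_neq0 s y_neq0) => ys ys_neq0.
by field; rewrite y_neq0 ys_neq0 z_neq0.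
Qed.

Definition cc_ratio (R : realFieldType) (d k s : nat) : R :=
  1 - k%:R / (s.+1%:R * d%:R).

Section CubicCodeValue.

Variables (R : realFieldType) (d k s : nat).
Hypotheses (d_gt0 : (0 < d)%N) (k_le_d : (k <= d)%N).

Local Notation q := (cc_ratio R d k s).

Lemma cc_ratio_ge0 : 0 <= q.
Proof.
rewrite subr_ge0 ler_pdivrMr ?mulr_gt0 ?ltr0n // mul1r -natrM ler_nat.
by rewrite (leq_trans k_le_d) // leq_pmull.
Qed.

Lemma cc_ratio_lt1 : (0 < k)%N -> q < 1.
Proof. by move=> k_gt0; rewrite gtrBl divr_gt0 ?mulr_gt0 ?ltr0n. Qed.

Lemma cc_value_ge (kv : {ffun 'I_s.+1 -> 'I_k.+1}) :
  (\sum_(i < s.+1) (kv i : nat))%N = k ->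
  d%:R ^+ s.+1 * (1 - q ^+ s.+1) <= (cc_value d kv)%:~R.
Proof.
move=> sum_kv.
have mean : (\sum_i (d%:R - (kv i : nat)%:R)) / s.+1%:R = d%:R * q.
  rewrite sumrB sumr_const card_ord -mulr_natl -natr_sum sum_kv /cc_ratio.
  by field; rewrite pnatr_eq0 -lt0n d_gt0 addrC natr1 pnatr_eq0.
rewrite /cc_value rmorphB rmorph_prod /= -[(d ^ s.+1)%N%:~R]/(d ^ s.+1)%:R.
rewrite natrX mulrBr mulr1 -exprMn -mean.
rewrite lerD2l lerN2 (eq_bigr _ (fun i _ => rmorphB _ _ _)) /=.
apply: prod_le_mean_expn => i; rewrite subr_ge0 ler_nat.
by rewrite (leq_trans _ k_le_d) // -ltnS.
Qed.

Lemma cc_bound_gt0 : (0 < k)%N -> 0 < d%:R ^+ s.+1 * (1 - q ^+ s.+1).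
Proof.
move=> k_gt0; rewrite mulr_gt0 ?exprn_gt0 ?ltr0n // subr_gt0.
by rewrite exprn_ilt1 ?cc_ratio_ge0 ?cc_ratio_lt1.
Qed.

End CubicCodeValue.

Lemma cc_m_ge (R : realFieldType) (n k s : nat) :
  (0 < fcrs_d n s)%N -> (k <= fcrs_d n s)%N ->
  (fcrs_d n s)%:R ^+ s.+1 * (1 - cc_ratio R (fcrs_d n s) k s ^+ s.+1)
    <= (cc_m n k s)%:~R.
Proof.
move=> d_gt0 k_le_d; apply: bigmin_intr_ge => [|kv /andP[/eqP sum_kv _]].
  rewrite -natrX ler_piMr ?exprn_ge0 // gerBl.
  by rewrite exprn_ge0 // cc_ratio_ge0.
exact: cc_value_ge.
Qed.

Theorem corollary1 (R : realFieldType) (M : R) (n k s : nat) :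
  (0 < M) -> (0 < n)%N -> (0 < k)%N -> (2 <= s)%N -> (s <= n %/ k)%N ->
  (fcrs_s0 n s <= minn s (fcrs_d n s))%N ->
  gamma_cc M n k s <=
    (M / (fcrs_d n s)%:R) /
      (1 - (1 - k%:R / ((s.+1)%:R * (fcrs_d n s)%:R)) ^+ s.+1).
Proof.
move=> M_gt0 _ k_gt0 s_ge2 s_le_nk _.
have k_le_d : (k <= fcrs_d n s)%N by apply: leq_divn_swap => //; apply: ltnW.
have d_gt0 : (0 < fcrs_d n s)%N := leq_trans k_gt0 k_le_d.
have m_ge := cc_m_ge R n k s d_gt0 k_le_d.
have B_gt0 := cc_bound_gt0 R _ _ s d_gt0 k_le_d k_gt0.
rewrite /gamma_cc -/(cc_ratio R _ k s) natrX (divf_cancel_expr _ s); last 2 first.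
- by rewrite pnatr_eq0 -lt0n.
- by apply: contraTneq B_gt0 => ->; rewrite mulr0 ltxx.
rewrite ler_pM2l ?mulr_gt0 ?exprn_gt0 ?ltr0n // lef_pV2 ?posrE //.
exact: lt_le_trans m_ge.
Qed.
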